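(* Let $\kappa$ be a kernel on $\mathbb{R}^d$ and $\psi$ a feature map such that, for a probability density $p$, $\kappa(\mathbf{x},\mathbf{x}')=\int\psi(\mathbf{x},\mathbf{v})\psi(\mathbf{x}',\mathbf{v})p(\mathbf{v})\,d\mathbf{v}$ for all $\mathbf{x},\mathbf{x}'$, and $\psi^2(\cdot\,;\cdot)\le b$ almost surely for some constant $b>0$. Fix points $\mathbf{x}_1,\dots,\mathbf{x}_n,\mathbf{x}'\in\mathbb{R}^d$ and let $\mathcal{V}_s=\{\mathbf{v}_1,\dots,\mathbf{v}_s\}$ be i.i.d. with density $p$. Then $$\mathbb{E}_{\mathcal{V}_s}\big[(\tilde{\mathbf{k}}'-\mathbf{k}')(\tilde{\mathbf{k}}'-\mathbf{k}')^T\big]\ \preceq\ \frac{b}{s}\mathbf{K}-\frac{1}{s}\mathbf{k}'\mathbf{k}'^T.$$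
   Context: $\boldsymbol{\psi}(\mathbf{x};\mathcal{V}_s)=\frac{1}{\sqrt{s}}[\psi(\mathbf{x};\mathbf{v}_1),\dots,\psi(\mathbf{x};\mathbf{v}_s)]^T\in\mathbb{R}^s$; $\boldsymbol{\Psi}\in\mathbb{R}^{n\times s}$ has $i$-th row $\boldsymbol{\psi}(\mathbf{x}_i;\mathcal{V}_s)^T$. $\mathbf{K}\in\mathbb{R}^{n\times n}$ has entries $K_{ij}=\kappa(\mathbf{x}_i,\mathbf{x}_j)$; $\mathbf{k}'\in\mathbb{R}^n$ has entries $k'_i=\kappa(\mathbf{x}_i,\mathbf{x}')$; $\tilde{\mathbf{k}}'=\boldsymbol{\Psi}\,\boldsymbol{\psi}(\mathbf{x}';\mathcal{V}_s)\in\mathbb{R}^n$, i.e. $\tilde k'_i=\boldsymbol{\psi}(\mathbf{x}_i;\mathcal{V}_s)^T\boldsymbol{\psi}(\mathbf{x}';\mathcal{V}_s)$. $\preceq$ is the Loewner order. *)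

From HB Require Import structures.
From mathcomp Require Import all_boot all_order all_algebra.
From mathcomp Require Import all_classical all_reals all_analysis.
Set Implicit Arguments. Unset Strict Implicit. Unset Printing Implicit Defensive.
Import Order.TTheory GRing.Theory Num.Theory.
Local Open Scope classical_set_scope.
Local Open Scope ring_scope.

Definition psd {R : realType} {n : nat} (M : 'M[R]_n) : Prop :=
  forall u : 'cV[R]_n, 0 <= (u^T *m M *m u) 0 0.

Definition loewner_le {R : realType} {n : nat} (A B : 'M[R]_n) : Prop :=
  psd (B - A).

(* Mutual independence of the random variables v_1, ..., v_s (product rule
   for all families of measurable events; taking A k = setT gives the
   product rule for every subfamily). *)
Definition mutually_independent {d1 d2} {Om : measurableType d1}
  {T : measurableType d2} {R : realType} (P : probability Om R) (s : nat)
  (v : 'I_s -> Om -> T) : Prop :=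
  forall A : 'I_s -> set T, (forall k, measurable (A k)) ->
    P (\bigcap_(k in [set: 'I_s]) (v k @^-1` A k)) =
    (\prod_(k < s) P (v k @^-1` A k))%E.

Definition has_law {d1 d2} {Om : measurableType d1}
  {T : measurableType d2} {R : realType} (P : probability Om R)
  (X : Om -> T) (mu : probability T R) : Prop :=
  forall A : set T, measurable A -> P (X @^-1` A) = mu A.


Definition psivec {R : realType} {X T : Type} {s : nat}
  (psi : X -> T -> R) (V : 'I_s -> T) (x : X) : 'cV[R]_s :=
  \col_(k < s) ((Num.sqrt (s%:R))^-1 * psi x (V k)).

Definition Psimx {R : realType} {X T : Type} {n s : nat}
  (psi : X -> T -> R) (V : 'I_s -> T) (xs : 'I_n -> X) : 'M[R]_(n, s) :=
  \matrix_(i < n) (psivec psi V (xs i))^T.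

Definition Kmx {R : realType} {X : Type} {n : nat}
  (kappa : X -> X -> R) (xs : 'I_n -> X) : 'M[R]_n :=
  \matrix_(i < n, j < n) kappa (xs i) (xs j).

Definition kvec {R : realType} {X : Type} {n : nat}
  (kappa : X -> X -> R) (xs : 'I_n -> X) (x' : X) : 'cV[R]_n :=
  \col_(i < n) kappa (xs i) x'.

Definition ktilde {R : realType} {X T : Type} {n s : nat}
  (psi : X -> T -> R) (V : 'I_s -> T) (xs : 'I_n -> X) (x' : X) : 'cV[R]_n :=
  Psimx psi V xs *m psivec psi V x'.

Definition Emx {d1} {Om : measurableType d1} {R : realType} {n : nat}
  (P : probability Om R) (M : Om -> 'M[R]_n) : 'M[R]_n :=
  \matrix_(i < n, j < n) fine (\int[P]_w (M w i j)%:E)%E.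

(* For a test vector u put H = sum_i u_i psi(x_i, .), F = H psi(x', .) and
   c = u^T k' = E F.  Then u^T (k~' - k') = s^-1 sum_k (F(v_k) - c) is the mean of
   s i.i.d. centred variables, so its second moment is s^-1 (E F^2 - c^2), while
   E F^2 <= b E H^2 = b u^T K u.  As psi^2 <= b holds only almost surely, psi is
   first clipped to [-sqrt b, sqrt b], which changes neither kappa nor the
   expectation. *)

From HB Require Import structures.
From mathcomp Require Import all_boot all_order all_algebra.
From mathcomp Require Import all_classical all_reals all_analysis.
From mathcomp Require Import measurable_realfun ring.
Import Order.TTheory GRing.Theory Num.Theory.
Local Open Scope classical_set_scope.
Local Open Scope ring_scope.

Set Implicit Arguments.
Unset Strict Implicit.
Unset Printing Implicit Defensive.

Section bounded_measurable.
Context {R : realType} {d : measure_display} {T : measurableType d}.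
Implicit Types f g : T -> R.

Definition bounded_measurable f :=
  measurable_fun setT f /\ exists M : R, forall x, `|f x| <= M.

Lemma eq_bounded_measurable f g :
  f =1 g -> bounded_measurable f -> bounded_measurable g.
Proof. by move=> /funext ->. Qed.

Lemma bounded_measurable_cst c : bounded_measurable (fun=> c).
Proof. by split => //; exists `|c|. Qed.

Lemma bounded_measurableD f g :
  bounded_measurable f -> bounded_measurable g -> bounded_measurable (f \+ g).
Proof.
move=> [mf [M fM]] [mg [N gN]]; split; first exact: measurable_funD.
by exists (M + N) => x; apply: le_trans (ler_normD _ _) (lerD (fM x) (gN x)).
Qed.

Lemma bounded_measurableB f g :
  bounded_measurable f -> bounded_measurable g -> bounded_measurable (f \- g).
Proof.
move=> hf [mg [N gN]]; apply: bounded_measurableD => //.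
by split; [exact: measurable_funN | exists N => x; rewrite normrN].
Qed.

Lemma bounded_measurableM f g :
  bounded_measurable f -> bounded_measurable g -> bounded_measurable (f \* g).
Proof.
move=> [mf [M fM]] [mg [N gN]]; split; first exact: measurable_funM.
by exists (M * N) => x; rewrite normrM; apply: ler_pM.
Qed.

Lemma bounded_measurable_sum (I : Type) (r : seq I) (F : I -> T -> R) :
  (forall i, bounded_measurable (F i)) ->
  bounded_measurable (fun x => \sum_(i <- r) F i x).
Proof.
move=> hF; elim: r => [|a r IH].
  apply: (eq_bounded_measurable _ (bounded_measurable_cst 0)) => x.
  by rewrite big_nil.
apply: (eq_bounded_measurable _ (bounded_measurableD (hF a) IH)) => x.
by rewrite big_cons.
Qed.

Lemma bounded_measurable_integrable (m : {measure set T -> \bar R}) f :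
  (m setT < +oo)%E -> bounded_measurable f -> m.-integrable setT (EFin \o f).
Proof.
move=> mfin [mf [M fM]]; apply/integrableP; split; first exact/measurable_EFinP.
apply: (@le_lt_trans _ _ (\int[m]_x (cst M%:E) x))%E.
  apply: ge0_le_integral => //.
  - by apply: measurableT_comp => //; exact/measurable_EFinP.
  - by move=> x _ /=; rewrite lee_fin fM.
rewrite integral_cst //= lte_mul_pinfty //.
by rewrite lee_fin (le_trans _ (fM point)).
Qed.

Lemma bounded_measurable_integrable_fin (m : {finite_measure set T -> \bar R}) f :
  bounded_measurable f -> m.-integrable setT (EFin \o f).
Proof. exact/bounded_measurable_integrable/fin_num_fun_lty/fin_num_measure. Qed.

End bounded_measurable.

Lemma bounded_measurable_comp {R : realType} {d d'} {T : measurableType d}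
    {U : measurableType d'} (f : U -> R) (X : T -> U) :
  bounded_measurable f -> measurable_fun setT X ->
  bounded_measurable (fun x => f (X x)).
Proof.
case=> mf [M fM] mX.
by split; [exact: measurableT_comp | exists M => x; exact: fM].
Qed.

Section Rintegral_bounded.
Context {R : realType} {d : measure_display} {T : measurableType d}.
Variable m : {finite_measure set T -> \bar R}.
Implicit Types f g : T -> R.

Lemma RintegralD_bounded f g : bounded_measurable f -> bounded_measurable g ->
  \int[m]_x (f x + g x) = \int[m]_x f x + \int[m]_x g x.
Proof.
by move=> hf hg; apply: RintegralD => //; exact: bounded_measurable_integrable_fin.
Qed.

Lemma RintegralB_bounded f g : bounded_measurable f -> bounded_measurable g ->
  \int[m]_x (f x - g x) = \int[m]_x f x - \int[m]_x g x.
Proof.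
by move=> hf hg; apply: RintegralB => //; exact: bounded_measurable_integrable_fin.
Qed.

Lemma RintegralZl_bounded c f : bounded_measurable f ->
  \int[m]_x (c * f x) = c * \int[m]_x f x.
Proof.
by move=> hf; apply: RintegralZl => //; exact: bounded_measurable_integrable_fin.
Qed.

Lemma Rintegral_sum_bounded (I : Type) (r : seq I) (F : I -> T -> R) :
  (forall i, bounded_measurable (F i)) ->
  \int[m]_x (\sum_(i <- r) F i x) = \sum_(i <- r) \int[m]_x F i x.
Proof.
move=> hF; elim: r => [|a r IH].
  under eq_Rintegral => x _ do rewrite big_nil.
  by rewrite big_nil Rintegral_cst // mul0r.
rewrite big_cons -IH -RintegralD_bounded //; last exact: bounded_measurable_sum.
by apply: eq_Rintegral => x _; rewrite big_cons.
Qed.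

Lemma le_Rintegral_bounded f g : bounded_measurable f -> bounded_measurable g ->
  (forall x, f x <= g x) -> \int[m]_x f x <= \int[m]_x g x.
Proof.
move=> hf hg fg; apply: le_Rintegral => //;
  exact: bounded_measurable_integrable_fin.
Qed.

End Rintegral_bounded.

Section centered_moments.
Context {R : realType} {d : measure_display} {T : measurableType d}.
Variable m : probability T R.
Implicit Types f : T -> R.

Lemma Rintegral_cst_probability c : \int[m]_x c = c.
Proof.
rewrite Rintegral_cst // (_ : fine _ = 1) ?mulr1 //.
exact: (congr1 fine (probability_setT m)).
Qed.

Lemma Rintegral_centered f : bounded_measurable f ->
  \int[m]_x (f x - \int[m]_y f y) = 0.
Proof.
move=> hf; rewrite RintegralB_bounded //; last exact: bounded_measurable_cst.
by rewrite Rintegral_cst_probability subrr.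
Qed.

Lemma Rintegral_centered_sqr f : bounded_measurable f ->
  \int[m]_x (f x - \int[m]_y f y) ^+ 2 =
  \int[m]_x f x ^+ 2 - (\int[m]_x f x) ^+ 2.
Proof.
move=> hf; set c := \int[m]_y f y.
have hf2 : bounded_measurable (fun x => f x ^+ 2) by exact: bounded_measurableM.
have hcf : bounded_measurable (fun x => 2 * c * f x).
  exact: bounded_measurableM (bounded_measurable_cst _) hf.
transitivity (\int[m]_x (f x ^+ 2 - 2 * c * f x + c ^+ 2)).
  by apply: eq_Rintegral => x _; ring.
rewrite RintegralD_bounded //;
  [|exact: bounded_measurableB|exact: bounded_measurable_cst].
rewrite RintegralB_bounded // RintegralZl_bounded // Rintegral_cst_probability.
by rewrite -/c; ring.
Qed.

End centered_moments.

Section law.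
Context {R : realType} {d dU : measure_display} {Om : measurableType d}
  {U : measurableType dU}.
Variables (P : probability Om R) (m : {measure set U -> \bar R}) (X : Om -> U).
Hypotheses (mX : measurable_fun setT X)
  (X_law : forall A, measurable A -> P (X @^-1` A) = m A).

Lemma Rintegral_law h : bounded_measurable h -> \int[P]_w h (X w) = \int[m]_u h u.
Proof.
move=> hh; rewrite /Rintegral; congr fine.
rewrite [RHS](eq_measure_integral (pushforward P X)); last first.
  by move=> A mA _; exact/esym/X_law.
rewrite integral_pushforward //.
  by case: hh => mh _; exact: measurableT_comp.
exact: bounded_measurable_integrable_fin (bounded_measurable_comp hh mX).
Qed.

Lemma ae_law (Q : U -> Prop) : {ae m, forall u, Q u} -> {ae P, forall w, Q (X w)}.
Proof.
move=> [N [mN N0 sub]]; exists (X @^-1` N); split.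
- by rewrite -[X @^-1` N]setTI; exact: mX.
- by rewrite X_law.
- by move=> w /= nq; apply: sub.
Qed.

End law.

Lemma Rintegral_prodM {R : realType} {d1 d2 : measure_display}
    {T1 : measurableType d1} {T2 : measurableType d2}
    (m1 : probability T1 R) (m2 : probability T2 R) (f : T1 -> R) (g : T2 -> R) :
  bounded_measurable f -> bounded_measurable g ->
  \int[(m1 \x m2)%E]_z (f z.1 * g z.2) = \int[m1]_x f x * \int[m2]_y g y.
Proof.
move=> hf hg.
have fin12 : ((m1 \x m2)%E setT < +oo)%E by rewrite probability_setT ltry.
have hfg : bounded_measurable (fun z : T1 * T2 => f z.1 * g z.2).
  by apply: bounded_measurableM; apply: bounded_measurable_comp;
    [exact: hf|exact: measurable_fst|exact: hg|exact: measurable_snd].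
rewrite -RintegralZr //; last exact: bounded_measurable_integrable_fin.
have ifg := bounded_measurable_integrable fin12 hfg.
rewrite /Rintegral -(integral12_prod_meas1 ifg).
congr fine; apply: eq_integral => x _; rewrite /fubini_F /=.
under eq_integral do rewrite EFinM.
have ig := bounded_measurable_integrable_fin m2 hg.
by rewrite integralZl // EFinM fineK //; exact: integrable_fin_num.
Qed.

Section iid.
Context {R : realType} {d dO : measure_display} {T : measurableType d}
  {Om : measurableType dO}.
Variables (mu : probability T R) (P : probability Om R) (s : nat)
  (v : 'I_s -> Om -> T).
Hypotheses (v_meas : forall k, measurable_fun setT (v k))
  (v_indep : mutually_independent P v) (v_law : forall k, has_law P (v k) mu).

Lemma probability_pair_setX k l A B : k != l -> measurable A -> measurable B ->
  P ((fun w => (v k w, v l w)) @^-1` (A `*` B)) = (mu A * mu B)%E.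
Proof.
move=> kl mA mB.
pose F j := if j == k then A else if j == l then B else setT.
have mF j : measurable (F j) by rewrite /F; case: ifP => // _; case: ifP.
have -> : (fun w => (v k w, v l w)) @^-1` (A `*` B) =
          \bigcap_(j in [set: 'I_s]) (v j @^-1` F j).
  apply/seteqP; split => [w [Aw Bw] j _|w Fw]; rewrite /F.
    by case: ifP => [/eqP -> //|_]; case: ifP => [/eqP -> //|].
  split; first by have := Fw k I; rewrite /F eqxx.
  by have := Fw l I; rewrite /F eqxx eq_sym (negbTE kl).
rewrite v_indep // (bigD1 k) //= (bigD1 l) 1?eq_sym //= big1 ?mule1.
  by rewrite /F eqxx eq_sym (negbTE kl) eqxx v_law // v_law.
move=> j /andP[jl jk]; rewrite /F (negbTE jk) (negbTE jl) preimage_setT.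
exact: probability_setT.
Qed.

Lemma Rintegral_pair_indep k l h : k != l -> bounded_measurable h ->
  \int[P]_w h (v k w, v l w) = \int[(mu \x mu)%E]_z h z.
Proof.
move=> kl hh; set pair := fun w => (v k w, v l w).
have mpair : measurable_fun setT pair by exact: measurable_fun_pair.
apply: Rintegral_law => // A mA; symmetry.
apply: (product_measure_unique (m' := pushforward P pair)) => // A1 A2 mA1 mA2.
exact: probability_pair_setX.
Qed.

Lemma Rintegral_indepM k l f g : k != l ->
  bounded_measurable f -> bounded_measurable g ->
  \int[P]_w (f (v k w) * g (v l w)) = \int[mu]_t f t * \int[mu]_t g t.
Proof.
move=> kl hf hg; rewrite -Rintegral_prodM //.
apply: (Rintegral_pair_indep (h := fun z => f z.1 * g z.2) kl).
by apply: bounded_measurableM; apply: bounded_measurable_comp;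
  [exact: hf|exact: measurable_fst|exact: hg|exact: measurable_snd].
Qed.

Lemma Rintegral_sqr_sum_centered G : bounded_measurable G -> \int[mu]_t G t = 0 ->
  \int[P]_w (\sum_k G (v k w)) ^+ 2 = s%:R * \int[mu]_t G t ^+ 2.
Proof.
move=> hG G0.
have hGv k : bounded_measurable (fun w => G (v k w)).
  exact: bounded_measurable_comp.
under eq_Rintegral => w _ do rewrite expr2 big_distrlr.
rewrite Rintegral_sum_bounded; last first.
  by move=> k; apply: bounded_measurable_sum => l; exact: bounded_measurableM.
rewrite mulr_natl -[in RHS](card_ord s) -sumr_const; apply: eq_bigr => k _.
rewrite Rintegral_sum_bounded; last by move=> l; exact: bounded_measurableM.
rewrite (bigD1 k) //= big1 ?addr0.
  exact: (Rintegral_law (v_meas k) (v_law k) (bounded_measurableM hG hG)).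
by move=> l lk; rewrite Rintegral_indepM 1?eq_sym // G0 mul0r.
Qed.

End iid.

Section quadratic_form.
Context {R : comPzRingType} {n : nat}.
Implicit Types (M N : 'M[R]_n) (u a : 'cV[R]_n).

Lemma qformE u M : (u^T *m M *m u) 0 0 = \sum_i \sum_j u i 0 * u j 0 * M i j.
Proof.
rewrite mxE; under eq_bigr do rewrite mxE big_distrl.
rewrite exchange_big; apply: eq_bigr => i _; apply: eq_bigr => j _.
by rewrite !mxE /= mulrAC.
Qed.

Lemma qformB u M N :
  (u^T *m (M - N) *m u) 0 0 = (u^T *m M *m u) 0 0 - (u^T *m N *m u) 0 0.
Proof. by rewrite mulmxBr mulmxBl !mxE. Qed.

Lemma qformZ u c M : (u^T *m (c *: M) *m u) 0 0 = c * (u^T *m M *m u) 0 0.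
Proof. by rewrite -scalemxAr -scalemxAl mxE. Qed.

Lemma mulmx_trmxE a i j : (a *m a^T) i j = a i 0 * a j 0.
Proof. by rewrite mxE big_ord1 mxE. Qed.

Lemma qform_outer u a : (u^T *m (a *m a^T) *m u) 0 0 = ((u^T *m a) 0 0) ^+ 2.
Proof.
rewrite mulmxA -mulmxA (_ : a^T *m u = (u^T *m a)^T); last first.
  by rewrite trmx_mul trmxK.
by rewrite mxE big_ord1 [X in _ * X]mxE expr2.
Qed.

End quadratic_form.

Section expected_outer_product.
Context {R : realType} {dO : measure_display} {Om : measurableType dO} {n : nat}.
Variable P : probability Om R.
Implicit Types (D : Om -> 'cV[R]_n) (u : 'cV[R]_n).

Lemma Emx_outer_ae_eq D D' :
  (forall i, measurable_fun setT (fun w => D w i 0)) ->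
  (forall i, measurable_fun setT (fun w => D' w i 0)) ->
  {ae P, forall w, D w = D' w} ->
  Emx P (fun w => D w *m (D w)^T) = Emx P (fun w => D' w *m (D' w)^T).
Proof.
move=> mD mD' DD'; apply/matrixP => i j; rewrite !mxE; congr fine.
have mentry (E : Om -> 'cV[R]_n) :
    (forall i, measurable_fun setT (fun w => E w i 0)) ->
    measurable_fun setT (fun w => ((E w *m (E w)^T) i j)%:E).
  move=> mE; apply/measurable_EFinP.
  apply: (eq_measurable_fun (fun w => E w i 0 * E w j 0)).
    by move=> w _; rewrite mulmx_trmxE.
  exact: measurable_funM.
apply: ae_eq_integral => //; [exact: mentry|exact: mentry|].
by apply: filterS DD' => w -> _.
Qed.

Lemma qform_Emx_outer D u : (forall i, bounded_measurable (fun w => D w i 0)) ->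
  (u^T *m Emx P (fun w => D w *m (D w)^T) *m u) 0 0 =
  \int[P]_w ((u^T *m D w) 0 0) ^+ 2.
Proof.
move=> hD.
have hDD i j : bounded_measurable (fun w => (D w *m (D w)^T) i j).
  apply: (eq_bounded_measurable (f := fun w => D w i 0 * D w j 0)).
    by move=> w; rewrite mulmx_trmxE.
  exact: bounded_measurableM.
under eq_Rintegral => w _ do rewrite -qform_outer qformE.
rewrite qformE Rintegral_sum_bounded; last first.
  move=> i; apply: bounded_measurable_sum => j.
  exact: bounded_measurableM (bounded_measurable_cst _) (hDD i j).
apply: eq_bigr => i _; rewrite Rintegral_sum_bounded; last first.
  by move=> j; exact: bounded_measurableM (bounded_measurable_cst _) (hDD i j).
by apply: eq_bigr => j _; rewrite RintegralZl_bounded // mxE.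
Qed.

End expected_outer_product.

Section clip.
Context {R : rcfType}.
Implicit Types b r : R.

Definition clip b r := Num.max (- Num.sqrt b) (Num.min (Num.sqrt b) r).

Lemma norm_clip_le b r : `|clip b r| <= Num.sqrt b.
Proof.
rewrite /clip ler_norml le_max lexx /= ge_max ge_min lexx orTb andbT.
by rewrite lerNl (le_trans _ (sqrtr_ge0 b)) // oppr_le0 sqrtr_ge0.
Qed.

Lemma sqr_clip_le b r : 0 <= b -> clip b r ^+ 2 <= b.
Proof.
move=> b0; rewrite -[leRHS](sqr_sqrtr b0) -real_normK ?num_real //.
by rewrite lerXn2r ?nnegrE ?sqrtr_ge0 // norm_clip_le.
Qed.

Lemma clip_id b r : r ^+ 2 <= b -> clip b r = r.
Proof.
move=> h; have : `|r| <= Num.sqrt b by rewrite -sqrtr_sqr ler_wsqrtr.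
by rewrite ler_norml => /andP[h1 h2]; rewrite /clip (min_r h2) (max_r h1).
Qed.

End clip.

Lemma bounded_measurable_clip {R : realType} {d : measure_display}
    {T : measurableType d} (b : R) (f : T -> R) :
  measurable_fun setT f -> bounded_measurable (fun t => clip b (f t)).
Proof.
move=> mf; split; last by exists (Num.sqrt b) => t; exact: norm_clip_le.
apply: measurable_maxr; first exact: measurable_cst.
by apply: measurable_minr => //; exact: measurable_cst.
Qed.

Section random_feature_algebra.
Context {R : realType} {X T : Type} {n s : nat}.
Variables (phi : X -> T -> R) (xs : 'I_n -> X) (x' : X).

Definition feature_comb (u : 'cV[R]_n) t := \sum_i u i 0 * phi (xs i) t.

Lemma ktilde_entry (V : 'I_s -> T) i :
  (ktilde phi V xs x') i 0 = s%:R^-1 * \sum_k phi (xs i) (V k) * phi x' (V k).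
Proof.
have sqrt_inv2 : (Num.sqrt (s%:R : R))^-1 * (Num.sqrt s%:R)^-1 = s%:R^-1.
  by rewrite -invfM -expr2 sqr_sqrtr // ler0n.
rewrite !mxE big_distrr; apply: eq_bigr => k _.
by rewrite !mxE mulrACA sqrt_inv2.
Qed.

Lemma ktilde_sub_kvec_entry kappa (V : 'I_s -> T) i :
  (ktilde phi V xs x' - kvec kappa xs x') i 0 =
  s%:R^-1 * \sum_k phi (xs i) (V k) * phi x' (V k) - kappa (xs i) x'.
Proof. by rewrite -ktilde_entry !mxE. Qed.

Lemma dot_ktilde (V : 'I_s -> T) u :
  (u^T *m ktilde phi V xs x') 0 0 =
  s%:R^-1 * \sum_k feature_comb u (V k) * phi x' (V k).
Proof.
rewrite mxE; under eq_bigr do rewrite ktilde_entry mxE mulrCA big_distrr.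
rewrite -big_distrr exchange_big; congr (_ * _); apply: eq_bigr => k _ /=.
by rewrite /feature_comb big_distrl; apply: eq_bigr => i _ /=; rewrite mulrA.
Qed.

End random_feature_algebra.

Lemma eq_ktilde {R : realType} {X T : Type} {n s : nat} (phi phi' : X -> T -> R)
    (V : 'I_s -> T) (xs : 'I_n -> X) (x' : X) :
  (forall i k, phi (xs i) (V k) = phi' (xs i) (V k)) ->
  (forall k, phi x' (V k) = phi' x' (V k)) ->
  ktilde phi V xs x' = ktilde phi' V xs x'.
Proof.
move=> eq_xs eq_x'; apply/matrixP => i j; rewrite (ord1 j) !ktilde_entry.
by congr (_ * _); apply: eq_bigr => k _; rewrite eq_xs eq_x'.
Qed.

Section ktilde_regularity.
Context {R : realType} {X T : Type} {dO : measure_display}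
  {Om : measurableType dO} {n s : nat}.
Variables (phi : X -> T -> R) (kappa : X -> X -> R) (V : 'I_s -> Om -> T)
  (xs : 'I_n -> X) (x' : X).

Lemma measurable_ktilde_sub_kvec :
  (forall x k, measurable_fun setT (fun w => phi x (V k w))) -> forall i,
  measurable_fun setT
    (fun w => (ktilde phi (V^~ w) xs x' - kvec kappa xs x') i 0).
Proof.
move=> mphi i; under eq_fun do rewrite ktilde_sub_kvec_entry.
apply: measurable_funB => //; apply: measurable_funM => //.
by apply: measurable_sum => k; exact: measurable_funM.
Qed.

Lemma bounded_measurable_ktilde_sub_kvec :
  (forall x k, bounded_measurable (fun w => phi x (V k w))) -> forall i,
  bounded_measurable (fun w => (ktilde phi (V^~ w) xs x' - kvec kappa xs x') i 0).
Proof.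
move=> hphi i; under eq_fun do rewrite ktilde_sub_kvec_entry.
apply: bounded_measurableB (bounded_measurable_cst _).
apply: bounded_measurableM (bounded_measurable_cst _) _.
by apply: bounded_measurable_sum => k; exact: bounded_measurableM.
Qed.

End ktilde_regularity.

Section ktilde_change_of_features.
Context {R : realType} {X : Type} {d dO : measure_display} {T : measurableType d}
  {Om : measurableType dO} {n s : nat}.
Variables (mu : probability T R) (P : probability Om R) (v : 'I_s -> Om -> T)
  (psi phi : X -> T -> R) (kappa : X -> X -> R) (xs : 'I_n -> X) (x' : X).
Hypotheses (psi_meas : forall x, measurable_fun setT (psi x))
  (phi_meas : forall x, measurable_fun setT (phi x))
  (psi_phi : forall x, {ae mu, forall t, psi x t = phi x t}).

Lemma kernel_ae_feature :
  (forall x y, (kappa x y)%:E = (\int[mu]_t (psi x t * psi y t)%:E)%E) ->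
  forall x y, kappa x y = \int[mu]_t (phi x t * phi y t).
Proof.
move=> kappa_feat x y.
rewrite /Rintegral -[X in X = _]/(fine (kappa x y)%:E) kappa_feat.
congr fine; apply: ae_eq_integral => //.
- by apply/measurable_EFinP; exact: measurable_funM.
- by apply/measurable_EFinP; exact: measurable_funM.
- by apply: filterS2 (psi_phi x) (psi_phi y) => t -> -> _.
Qed.

Hypotheses (v_meas : forall k, measurable_fun setT (v k))
  (v_law : forall k, has_law P (v k) mu).

Lemma Emx_ktilde_ae_feature :
  Emx P (fun w =>
    let D := ktilde psi (fun k => v k w) xs x' - kvec kappa xs x' in D *m D^T) =
  Emx P (fun w =>
    let D := ktilde phi (fun k => v k w) xs x' - kvec kappa xs x' in D *m D^T).
Proof.
apply: Emx_outer_ae_eq.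
- by apply: measurable_ktilde_sub_kvec => x k; exact: measurableT_comp.
- by apply: measurable_ktilde_sub_kvec => x k; exact: measurableT_comp.
pose pt (i : option 'I_n) := if i is Some i then xs i else x'.
have : {ae P, forall w k i, psi (pt i) (v k w) = phi (pt i) (v k w)}.
  apply: filter_forall => k; apply: filter_forall => i.
  exact: (ae_law (v_meas k) (v_law k)
    (Q := fun t => psi (pt i) t = phi (pt i) t) (psi_phi (pt i))).
apply: filterS => w eq_psi; rewrite (eq_ktilde (phi' := phi)) //.
- by move=> i k; exact: eq_psi k (Some i).
- by move=> k; exact: eq_psi k None.
Qed.

End ktilde_change_of_features.

Section random_features.
Context {R : realType} {X : Type} {d dO : measure_display} {T : measurableType d}
  {Om : measurableType dO}.
Variables (mu : probability T R) (phi : X -> T -> R) (kappa : X -> X -> R).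
Hypotheses (phi_bdd : forall x, bounded_measurable (phi x))
  (kappaE : forall x y, kappa x y = \int[mu]_t (phi x t * phi y t)).
Variables (n : nat) (xs : 'I_n -> X).
Implicit Type u : 'cV[R]_n.

Lemma bounded_measurable_feature_comb u :
  bounded_measurable (feature_comb phi xs u).
Proof.
apply: bounded_measurable_sum => i.
exact: bounded_measurableM (bounded_measurable_cst _) (phi_bdd _).
Qed.

Lemma qform_Kmx u :
  (u^T *m Kmx kappa xs *m u) 0 0 = \int[mu]_t feature_comb phi xs u t ^+ 2.
Proof.
have hphi2 i j :
    bounded_measurable (fun t => u i 0 * u j 0 * (phi (xs i) t * phi (xs j) t)).
  exact: bounded_measurableM (bounded_measurable_cst _)
    (bounded_measurableM (phi_bdd _) (phi_bdd _)).
rewrite (@eq_Rintegral _ _ _ mu setT (fun t =>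
    \sum_i \sum_j u i 0 * u j 0 * (phi (xs i) t * phi (xs j) t))); last first.
  move=> t _; rewrite /feature_comb expr2 big_distrlr.
  by apply: eq_bigr => i _; apply: eq_bigr => j _ /=; rewrite mulrACA.
rewrite qformE Rintegral_sum_bounded; last first.
  by move=> i; exact: bounded_measurable_sum.
apply: eq_bigr => i _; rewrite Rintegral_sum_bounded //; apply: eq_bigr => j _.
by rewrite RintegralZl_bounded ?mxE ?kappaE //; exact: bounded_measurableM.
Qed.

Lemma dot_kvec u x' :
  (u^T *m kvec kappa xs x') 0 0 = \int[mu]_t (feature_comb phi xs u t * phi x' t).
Proof.
rewrite mxE /feature_comb; under eq_Rintegral => t _ do rewrite big_distrl.
rewrite Rintegral_sum_bounded; last first.
  move=> i; apply: bounded_measurableM (phi_bdd _).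
  exact: bounded_measurableM (bounded_measurable_cst _) (phi_bdd _).
apply: eq_bigr => i _; rewrite !mxE kappaE -RintegralZl_bounded; last first.
  exact: bounded_measurableM.
by apply: eq_Rintegral => t _; rewrite mulrA.
Qed.

Variables (P : probability Om R) (s : nat) (v : 'I_s -> Om -> T) (x' : X).
Hypotheses (s_pos : (0 < s)%N) (v_meas : forall k, measurable_fun setT (v k))
  (v_indep : mutually_independent P v) (v_law : forall k, has_law P (v k) mu).

Let Edev := Emx P (fun w =>
  let D := ktilde phi (fun k => v k w) xs x' - kvec kappa xs x' in D *m D^T).

Lemma qform_Emx_ktilde u :
  (u^T *m Edev *m u) 0 0 =
  s%:R^-1 * (\int[mu]_t (feature_comb phi xs u t * phi x' t) ^+ 2
             - ((u^T *m kvec kappa xs x') 0 0) ^+ 2).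
Proof.
set F := fun t => feature_comb phi xs u t * phi x' t.
have hF : bounded_measurable F.
  exact: bounded_measurableM (bounded_measurable_feature_comb u) (phi_bdd x').
set G := fun t => F t - \int[mu]_t F t.
have hG : bounded_measurable G.
  exact: bounded_measurableB (bounded_measurable_cst _).
have devE w :
    (u^T *m (ktilde phi (fun k => v k w) xs x' - kvec kappa xs x')) 0 0 =
    s%:R^-1 * \sum_k G (v k w).
  rewrite mulmxBr [LHS]mxE [X in _ + X]mxE dot_ktilde dot_kvec.
  rewrite /G sumrB sumr_const card_ord mulrBr; congr (_ - _).
  by rewrite -[X in _ * X]mulr_natl mulKf // pnatr_eq0 -lt0n.
rewrite (@qform_Emx_outer _ _ _ _ P (fun w =>
    ktilde phi (fun k => v k w) xs x' - kvec kappa xs x')); last first.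
  apply: bounded_measurable_ktilde_sub_kvec => y k.
  exact: bounded_measurable_comp.
under eq_Rintegral => w _ do rewrite devE exprMn.
rewrite RintegralZl_bounded; last first.
  apply: bounded_measurableM; apply: bounded_measurable_sum => k;
    exact: bounded_measurable_comp.
rewrite (Rintegral_sqr_sum_centered v_meas v_indep v_law hG); last first.
  exact: Rintegral_centered.
rewrite Rintegral_centered_sqr // -dot_kvec.
by field; rewrite pnatr_eq0 -lt0n.
Qed.

Lemma Emx_ktilde_loewner_le b : (forall t, phi x' t ^+ 2 <= b) ->
  loewner_le Edev ((b / s%:R) *: Kmx kappa xs -
                   s%:R^-1 *: (kvec kappa xs x' *m (kvec kappa xs x')^T)).
Proof.
move=> phi_le u; rewrite !qformB !qformZ qform_outer qform_Emx_ktilde qform_Kmx.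
set H := feature_comb phi xs u.
have hH : bounded_measurable H := bounded_measurable_feature_comb u.
have hHx' : bounded_measurable (fun t => H t * phi x' t).
  exact: (bounded_measurableM hH (phi_bdd x')).
have HF : \int[mu]_t (H t * phi x' t) ^+ 2 <= b * \int[mu]_t H t ^+ 2.
  rewrite -RintegralZl_bounded; last exact: (bounded_measurableM hH hH).
  apply: le_Rintegral_bounded => [||t].
  - exact: (bounded_measurableM hHx' hHx').
  - exact: bounded_measurableM (bounded_measurable_cst _)
      (bounded_measurableM hH hH).
  - by rewrite exprMn mulrC ler_wpM2r ?sqr_ge0.
set K := \int[mu]_t H t ^+ 2; set A := \int[mu]_t (H t * phi x' t) ^+ 2.
have -> : forall c2 : R, b / s%:R * K - s%:R^-1 * c2 - s%:R^-1 * (A - c2) =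
  s%:R^-1 * (b * K - A) by move=> c2; ring.
by rewrite mulr_ge0 ?invr_ge0 ?ler0n // subr_ge0.
Qed.

End random_features.

Theorem lemma8 (R : realType) (d : nat)
  (dT : measure_display) (T : measurableType dT) (mu : probability T R)
  (kappa : 'rV[R]_d -> 'rV[R]_d -> R) (psi : 'rV[R]_d -> T -> R) (b : R)
  (psi_meas : forall x, measurable_fun setT (psi x))
  (kappa_feat : forall x x',
     (kappa x x')%:E = (\int[mu]_v (psi x v * psi x' v)%:E)%E)
  (b_pos : 0 < b)
  (psi_bdd : forall x, {ae mu, forall v, psi x v ^+ 2 <= b})
  (n : nat) (xs : 'I_n -> 'rV[R]_d) (x' : 'rV[R]_d)
  (s : nat) (s_pos : (0 < s)%N)
  (dO : measure_display) (Om : measurableType dO) (P : probability Om R)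
  (v : 'I_s -> Om -> T)
  (v_meas : forall k, measurable_fun setT (v k))
  (v_indep : mutually_independent P v)
  (v_law : forall k, has_law P (v k) mu) :
  loewner_le
    (Emx P (fun w =>
       let D := ktilde psi (fun k => v k w) xs x' - kvec kappa xs x' in
       D *m D^T))
    ((b / s%:R) *: Kmx kappa xs - (s%:R)^-1 *: (kvec kappa xs x' *m (kvec kappa xs x')^T)).
Proof.
pose psi_b x t := clip b (psi x t).
have psi_b_bdd x : bounded_measurable (psi_b x).
  exact: bounded_measurable_clip.
have psi_b_ae x : {ae mu, forall t, psi x t = psi_b x t}.
  by apply: filterS (psi_bdd x) => t /clip_id.
have psi_b_meas x : measurable_fun setT (psi_b x) := proj1 (psi_b_bdd x).
have kappaE := kernel_ae_feature psi_meas psi_b_meas psi_b_ae kappa_feat.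
rewrite (Emx_ktilde_ae_feature kappa xs x' psi_meas psi_b_meas psi_b_ae
  v_meas v_law).
apply: (Emx_ktilde_loewner_le psi_b_bdd kappaE xs s_pos v_meas v_indep v_law).
by move=> t; exact/sqr_clip_le/ltW.
Qed.
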